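(* Let $\alpha\ge2$, $k\ge2$ and $0\le t<\alpha$ be integers and $n=k\alpha+t$. Then $$\lambda_{n,\alpha}\le\begin{cases}k-1+\dfrac{2}{k-1}, & t=0,\\[2mm] k+\dfrac{2}{k}, & 1\le t<\alpha.\end{cases}$$
   Context: All graphs are finite and simple; $\lambda(G)$ is the spectral radius of the adjacency matrix of $G$. For integers $n\ge\alpha\ge1$, $\mathcal{G}_{n,\alpha}$ is the set of all connected graphs of order $n$ with independence number $\alpha$, and $\lambda_{n,\alpha}=\min\{\lambda(G):G\in\mathcal{G}_{n,\alpha}\}$. *)

From HB Require Import structures.
From mathcomp Require Import all_boot all_order all_algebra all_field.
Set Implicit Arguments. Unset Strict Implicit. Unset Printing Implicit Defensive.
Import Order.TTheory GRing.Theory Num.Theory.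
Local Open Scope ring_scope.

Definition simple_graph (n : nat) (e : rel 'I_n) : Prop :=
  (forall x y, e x y = e y x) /\ (forall x, ~~ e x x).

Definition connected_graph (n : nat) (e : rel 'I_n) : Prop :=
  forall x y, connect e x y.

Definition independent_set (n : nat) (e : rel 'I_n) (S : {set 'I_n}) : bool :=
  [forall x in S, forall y in S, ~~ e x y].

Definition independence_number (n : nat) (e : rel 'I_n) (a : nat) : Prop :=
  (exists S : {set 'I_n}, independent_set e S /\ #|S| = a) /\
  (forall S : {set 'I_n}, independent_set e S -> (#|S| <= a)%N).

Definition adj_matrix (n : nat) (e : rel 'I_n) : 'M[algC]_n :=
  \matrix_(i, j) (e i j)%:R.

Definition spectral_radius (n : nat) (A : 'M[algC]_n) (r : algC) : Prop :=
  (exists a, eigenvalue A a /\ `|a| = r) /\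
  (forall a, eigenvalue A a -> `|a| <= r).

Definition in_G (n alpha : nat) (e : rel 'I_n) : Prop :=
  simple_graph e /\ connected_graph e /\ independence_number e alpha.

Definition lambda_min (n alpha : nat) (r : algC) : Prop :=
  (exists e : rel 'I_n, in_G alpha e /\ spectral_radius (adj_matrix e) r) /\
  (forall (e : rel 'I_n) (s : algC), in_G alpha e ->
      spectral_radius (adj_matrix e) s -> r <= s).

From HB Require Import structures.
From mathcomp Require Import all_boot all_order all_algebra all_field.
From mathcomp Require Import zify ring.
From Stdlib Require Import FunctionalExtensionality ClassicalEpsilon.
Import Order.TTheory GRing.Theory Num.Theory.
Local Open Scope ring_scope.

(* The bound is witnessed by one explicit graph.  For a >= 1 and
   2a <= N <= (p+1)a, the graph [cliques_path a N] on 'I_N makes every residue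
   class mod a a clique (a cliques of at most p+1 vertices each) and joins the
   cliques of residues i and i+1 by the single bridge {i, i+a+1}.  Weighting the bridge ends by
   1 + 1/p and all other vertices by 1, each weighted column sum of its
   adjacency matrix is at most p + 2/p times the weight of the column, so by a
   Collatz-Wielandt argument every eigenvalue has modulus at most p + 2/p. *)

Lemma real_argmax (T : eqType) (s : seq T) (f : T -> algC) :
  s != [::] -> {in s, forall x, f x \is Num.real} ->
  exists2 y, y \in s & {in s, forall z, f z <= f y}.
Proof.
elim: s => [//|a s IH] _ real_f.
have real_a := real_f a (mem_head _ _).
have [-> | s_ne] := eqVneq s [::].
  by exists a; rewrite ?mem_head // => z; rewrite inE => /eqP ->.
have [y y_s max_y] : exists2 y, y \in s & {in s, forall z, f z <= f y}.
  by apply: IH => // x x_s; apply: real_f; rewrite inE x_s orbT.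
have real_y : f y \is Num.real by apply: real_f; rewrite inE y_s orbT.
have [le_ay | le_ya] := orP (real_leVge real_a real_y).
- exists y; first by rewrite inE y_s orbT.
  by move=> z; rewrite inE => /predU1P[->|/max_y].
- exists a; first exact: mem_head.
  by move=> z; rewrite inE => /predU1P[->//|/max_y/le_trans]; apply.
Qed.

Lemma real_argmin_finite (T : finType) (P : T -> Prop) (f : T -> algC) :
  (forall x, f x \is Num.real) -> (exists x, P x) ->
  exists2 x, P x & forall y, P y -> f x <= f y.
Proof.
move=> real_f [x0 P_x0].
pose inP x := if excluded_middle_informative (P x) then true else false.
have inPP x : reflect (P x) (inP x).
  by rewrite /inP; case: excluded_middle_informative => Px; constructor.
set s := [seq x <- enum T | inP x].
have memsP x : reflect (P x) (x \in s) by rewrite mem_filter mem_enum andbT.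
have s_ne : s != [::] by apply: contraTneq (introT (memsP x0) P_x0) => ->.
have real_negf : {in s, forall x, - f x \is Num.real}.
  by move=> x _; rewrite rpredN.
have [x /memsP P_x max_x] := @real_argmax _ s (fun x => - f x) s_ne real_negf.
by exists x => // y /memsP /max_x; rewrite lerN2.
Qed.

(* Every square matrix of positive size has a spectral radius: its
   characteristic polynomial splits over algC and some root has maximal
   modulus. *)
Lemma spectral_radius_exists {n} (A : 'M[algC]_n.+1) :
  exists r, spectral_radius A r.
Proof.
have [rs char_rs] := closed_field_poly_normal (char_poly A).
have eigen_rs a : eigenvalue A a = (a \in rs).
  rewrite eigenvalue_root_char char_rs (eqP (char_poly_monic A)) scale1r.
  exact: root_prod_XsubC.
have rs_ne : rs != [::].
  apply/eqP => rs0; move: (size_char_poly A); rewrite char_rs rs0 big_nil.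
  by rewrite size_scale ?size_poly1 // lead_coef_eq0 -size_poly_eq0 size_char_poly.
have [y y_rs max_y] := @real_argmax _ rs (fun a => `|a|) rs_ne
  (fun a _ => normr_real a).
exists `|y|; split; first by exists y; rewrite eigen_rs.
by move=> a; rewrite eigen_rs => /max_y.
Qed.

Lemma spectral_radius_unique {n} {A : 'M[algC]_n} {r s : algC} :
  spectral_radius A r -> spectral_radius A s -> r = s.
Proof.
move=> [[a [eig_a <-]] max_r] [[b [eig_b <-]] max_s].
by apply/le_anti; rewrite max_s // max_r.
Qed.

(* Eigenvalues act on row vectors: v *m A = a v. *)
Lemma eigenvalue_norm_le_weighted_colsum {n} {A : 'M[algC]_n}
    (x : 'I_n -> algC) {lam a : algC} :
  (forall i j, 0 <= A i j) -> (forall i, 0 < x i) ->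
  (forall j, \sum_i x i * A i j <= lam * x j) ->
  eigenvalue A a -> `|a| <= lam.
Proof.
move=> A_ge0 x_gt0 colsum /eigenvalueP [v vA v_neq0].
have [i0 vi0_neq0] : exists i0, v 0 i0 != 0.
  apply/existsP; apply: contraNT v_neq0; rewrite negb_exists => /forallP v0.
  by apply/eqP/matrixP => i j; rewrite ord1 mxE; apply/eqP/negPn/v0.
have enum_ne : enum 'I_n != [::] by apply: contraTneq (mem_enum predT i0) => ->.
(* j maximises the ratio c = |v_j| / x_j, so that |v_i| <= c x_i for all i. *)
have [j _ max_j] := @real_argmax _ _ (fun i => `|v 0 i| / x i) enum_ne
  (fun i _ => ger0_real (divr_ge0 (normr_ge0 _) (ltW (x_gt0 i)))).
set c := `|v 0 j| / x j in max_j.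
have v_le i : `|v 0 i| <= c * x i.
  by rewrite -ler_pdivrMr //; apply: max_j; rewrite mem_enum.
have c_gt0 : 0 < c.
  by apply: lt_le_trans (max_j i0 (mem_enum _ _)); rewrite divr_gt0 // normr_gt0.
have vj : `|v 0 j| = c * x j by rewrite /c divfK // gt_eqF.
have vj_gt0 : 0 < `|v 0 j| by rewrite vj mulr_gt0.
have eigen_j : a * v 0 j = \sum_i v 0 i * A i j.
  by have := congr1 (fun M : 'M[algC]_(1, n) => M 0 j) vA; rewrite !mxE => <-.
rewrite -(ler_pM2r vj_gt0) -normrM eigen_j.
apply: le_trans (ler_norm_sum _ _ _) _.
apply: (le_trans (y := \sum_i c * (x i * A i j))).
  apply: ler_sum => i _; rewrite normrM (ger0_norm (A_ge0 i j)) mulrA.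
  by apply: ler_wpM2r => //; apply: v_le.
by rewrite -mulr_sumr vj mulrCA; apply: ler_wpM2l; [apply: ltW | apply: colsum].
Qed.

Definition rel_of_ffun {T : finType} (f : {ffun T * T -> bool}) : rel T :=
  fun x y => f (x, y).

Lemma rel_of_ffunK {T : finType} (e : rel T) :
  rel_of_ffun [ffun p => e p.1 p.2] = e.
Proof.
by apply: functional_extensionality => x; apply: functional_extensionality => y;
  rewrite /rel_of_ffun ffunE.
Qed.

(* lambda_{n,alpha} exists as soon as some graph has order n and independence
   number alpha: there are only finitely many graphs on 'I_n. *)
Lemma lambda_min_exists {n alpha} {e0 : rel 'I_n.+1} :
  in_G alpha e0 -> exists r, lambda_min n.+1 alpha r.
Proof.
move=> G_e0.
pose rho (f : {ffun 'I_n.+1 * 'I_n.+1 -> bool}) :=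
  constructive_indefinite_description _
    (spectral_radius_exists (adj_matrix (rel_of_ffun f))).
have rhoP f : spectral_radius (adj_matrix (rel_of_ffun f)) (sval (rho f)).
  exact: svalP.
have real_rho f : sval (rho f) \is Num.real.
  by case: (rhoP f) => [[a [_ <-]] _]; apply: normr_real.
have G_ne :
    exists f : {ffun 'I_n.+1 * 'I_n.+1 -> bool}, in_G alpha (rel_of_ffun f).
  by exists [ffun p => e0 p.1 p.2]; rewrite rel_of_ffunK.
have [f0 G_f0 min_f0] :=
  @real_argmin_finite _ (fun f => in_G alpha (rel_of_ffun f)) _
    real_rho G_ne.
exists (sval (rho f0)); split; first by exists (rel_of_ffun f0).
move=> e s; rewrite -(rel_of_ffunK e) => G_e sr_s.
by rewrite -(spectral_radius_unique (rhoP _) sr_s); apply: min_f0.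
Qed.

Local Close Scope ring_scope.

Definition clique_mate a n (u v : 'I_n) : bool := (u != v) && (u %% a == v %% a).

(* Bridges: the edge {u, u + a + 1} for u < a - 1 joins the cliques of
   residues u and u + 1. *)
Definition bridge a n (u v : 'I_n) : bool :=
  ((u.+1 < a) && (v == u + a.+1 :> nat)) || ((v.+1 < a) && (u == v + a.+1 :> nat)).

Arguments clique_mate a {n} u v.
Arguments bridge a {n} u v.

Definition cliques_path a n : rel 'I_n := fun u v => clique_mate a u v || bridge a u v.

Definition bridge_end a (j : nat) : bool := (j.+1 < a) || ((a < j) && (j < a + a)).

Lemma cliques_path_simple a n : simple_graph (cliques_path a n).
Proof.
split=> [x y | x].
  by rewrite /cliques_path /clique_mate /bridge eq_sym [x %% a == _]eq_sym
    [in X in _ || X]orbC.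
rewrite /cliques_path /clique_mate /bridge eqxx /=.
by apply/negP => /orP[] /andP[_ /eqP]; lia.
Qed.

(* Every vertex reaches 0: a vertex reaches its residue through its clique,
   and residue j+1 reaches residue j through the bridge {j, j+a+1}. *)
Lemma cliques_path_connected a n :
  0 < a -> a + a <= n -> connected_graph (cliques_path a n).
Proof.
move=> a_gt0 le_2a_n.
have n_gt0 : 0 < n by lia.
pose o0 := Ordinal n_gt0.
have residue_to_0 j :
    j < a -> forall u : 'I_n, val u = j -> connect (cliques_path a n) u o0.
  elim: j => [|j IH] lt_j_a u u_j; first by have -> : u = o0 by apply: val_inj.
  have lt_j_n : j < n by lia.
  have lt_bridge_n : j + a.+1 < n by lia.
  apply: (connect_trans (y := Ordinal lt_bridge_n)).
    apply: connect1; rewrite /cliques_path /clique_mate /= u_j; apply/orP; left.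
    apply/andP; split; first by apply/eqP => /(congr1 val) /=; rewrite u_j; lia.
    by rewrite addnS -addSn modnDr.
  apply: (connect_trans (y := Ordinal lt_j_n)); last by apply: IH => //; lia.
  apply: connect1; rewrite /cliques_path /bridge /=; apply/orP; right.
  by apply/orP; right; apply/andP; split; [lia|].
have to_0 (x : 'I_n) : connect (cliques_path a n) x o0.
  have lt_res_n : x %% a < n by have := ltn_pmod x a_gt0; lia.
  apply: (connect_trans (y := Ordinal lt_res_n)).
    have [<- | x_neq] := eqVneq x (Ordinal lt_res_n); first exact: connect0.
    by apply: connect1; rewrite /cliques_path /clique_mate x_neq /= modn_mod eqxx.
  exact: residue_to_0 (ltn_pmod x a_gt0) _ _.
move=> x y; apply: connect_trans (to_0 x) _.
rewrite (sym_connect_sym (fun u v => proj1 (cliques_path_simple a n) u v)).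
exact: to_0.
Qed.

(* The vertices 0, ..., a-1 are pairwise non-adjacent, and an independent set
   meets each of the a cliques at most once. *)
Lemma cliques_path_independence a n :
  0 < a -> a <= n -> independence_number (cliques_path a n) a.
Proof.
move=> a_gt0 le_a_n; split.
  exists (widen_ord le_a_n @: [set: 'I_a]); split.
    apply/forallP => x; apply/implyP => /imsetP [i _ ->].
    apply/forallP => y; apply/implyP => /imsetP [j _ ->].
    rewrite /cliques_path /clique_mate /bridge /= !modn_small //.
    have := ltn_ord i; have := ltn_ord j.
    case: (eqVneq i j) => [-> | ]; first by rewrite eqxx /=; lia.
    by rewrite -val_eqE => /negbTE neq_ij; rewrite -val_eqE /= neq_ij /=; lia.
  rewrite card_imset ?cardsT ?card_ord //.
  by move=> i j /(congr1 val) /= eq_ij; apply: val_inj.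
move=> S indep_S.
pose residue (u : 'I_n) : 'I_a := Ordinal (ltn_pmod u a_gt0).
have residue_inj : {in S &, injective residue}.
  move=> u v u_S v_S /(congr1 val) /= eq_uv; apply/eqP; apply: contraT => neq_uv.
  move: indep_S => /forallP/(_ u)/implyP/(_ u_S)/forallP/(_ v)/implyP/(_ v_S).
  by rewrite /cliques_path /clique_mate neq_uv eq_uv eqxx.
rewrite -(card_in_imset residue_inj).
by apply: leq_trans (max_card _) _; rewrite card_ord.
Qed.

Lemma bridge_end_residue a j : bridge_end a j -> (j == j %% a) || (j == j %% a + a).
Proof.
rewrite /bridge_end => /orP[lt_j | /andP[lt_a_j lt_j_2a]].
  by rewrite modn_small ?eqxx //; lia.
have le_a_j : a <= j by lia.
have -> : j %% a = j - a by rewrite -{1}(subnK le_a_j) modnDr modn_small //; lia.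
by apply/orP; right; apply/eqP; lia.
Qed.

Lemma card_vertex_of_value n (c : nat) : #|[set i : 'I_n | i == c :> nat]| <= 1.
Proof.
apply/card_le1_eqP => x y; rewrite !inE => /eqP x_c /eqP y_c.
by apply: val_inj; rewrite /= x_c y_c.
Qed.

(* When n <= (p+1)a, a residue class has at most p+1 elements, so a vertex
   has at most p clique mates. *)
Lemma card_clique_mates a {n} p (j : 'I_n) :
  0 < a -> n <= p.+1 * a -> #|[set i : 'I_n | clique_mate a i j]| <= p.
Proof.
move=> a_gt0 le_n.
set C := [set i : 'I_n | i %% a == j %% a].
have -> : [set i : 'I_n | clique_mate a i j] = C :\ j.
  by apply/setP => i; rewrite !inE /clique_mate.
have lt_quo (i : 'I_n) : i %/ a < p.+1.
  by rewrite ltn_divLR //; have := ltn_ord i; lia.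
pose quotient (i : 'I_n) : 'I_p.+1 := Ordinal (lt_quo i).
have quotient_inj : {in C &, injective quotient}.
  move=> u v; rewrite !inE => /eqP u_j /eqP v_j /(congr1 val) /= eq_uv.
  by apply: val_inj; rewrite /= (divn_eq u a) (divn_eq v a) eq_uv u_j v_j.
have card_C : #|C| <= p.+1.
  rewrite -(card_in_imset quotient_inj); apply: leq_trans (max_card _) _.
  by rewrite card_ord.
by move: card_C; rewrite (cardsD1 j) inE eqxx /=; lia.
Qed.

(* A clique contains at most two bridge ends (its residue r and r + a); so
   the clique mates of j that are bridge ends, together with j itself if it
   is one, number at most two. *)
Lemma card_bridge_end_mates a {n} (j : 'I_n) :
  #|[set i : 'I_n | clique_mate a i j && bridge_end a i]| + bridge_end a j <= 2.
Proof.
set U := [set i : 'I_n | i == j %% a :> nat]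
  :|: [set i : 'I_n | i == j %% a + a :> nat].
have card_U : #|U| <= 2.
  rewrite cardsU; have := card_vertex_of_value n (j %% a).
  by have := card_vertex_of_value n (j %% a + a); lia.
have sub_U : [set i : 'I_n | clique_mate a i j && bridge_end a i] \subset U :\ j.
  apply/subsetP => i; rewrite !inE /clique_mate.
  move=> /andP[/andP[neq_ij /eqP eq_res] end_i].
  by rewrite neq_ij /= -eq_res; apply: bridge_end_residue.
have U_j : bridge_end a j -> j \in U by move=> end_j; rewrite !inE bridge_end_residue.
have := subset_leq_card sub_U; move: card_U; rewrite (cardsD1 j U).
by case: (bridge_end a j) U_j => [/(_ isT) -> | _] /=; lia.
Qed.

Lemma card_bridge_neighbours a {n} (j : 'I_n) :
  #|[set i : 'I_n | bridge a i j]| <= bridge_end a j.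
Proof.
case end_j : (bridge_end a j); move: end_j; rewrite /bridge_end => end_j.
  apply/card_le1_eqP => x y; rewrite !inE /bridge => x_j y_j.
  by apply: val_inj; move: x_j y_j end_j;
    case/orP=> /andP[? /eqP ?]; case/orP=> /andP[? /eqP ?] /=; lia.
rewrite leqn0 cards_eq0; apply/eqP/setP => i; rewrite !inE /bridge.
by apply/negP; case/orP=> /andP[? /eqP ?]; move: end_j; lia.
Qed.

Local Open Scope ring_scope.

Lemma sum_indicator n (P : pred 'I_n) :
  \sum_i ((P i)%:R : algC) = #|[set i | P i]|%:R.
Proof.
rewrite -sum1_card natr_sum [RHS]big_mkcond /=; apply: eq_bigr => i _.
by rewrite inE; case: (P i).
Qed.

Definition bridge_weight a (p : algC) (i : nat) : algC :=
  if bridge_end a i then 1 + p^-1 else 1.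

Lemma weighted_colsum_le_counts a {n} (p : algC) (j : 'I_n) : 0 <= p ->
  \sum_(i < n) bridge_weight a p i * adj_matrix (cliques_path a n) i j <=
    #|[set i | clique_mate a i j]|%:R
    + p^-1 * #|[set i | clique_mate a i j && bridge_end a i]|%:R
    + (1 + p^-1) * #|[set i | bridge a i j]|%:R.
Proof.
move=> p_ge0; have pV_ge0 : 0 <= p^-1 by rewrite invr_ge0.
rewrite -!sum_indicator !mulr_sumr -!big_split /=; apply: ler_sum => i _.
rewrite mxE /cliques_path /bridge_weight.
case: (clique_mate a i j); case: (bridge a i j); case: (bridge_end a i) => /=;
  by rewrite ?mulr1 ?mulr0 ?addr0 ?add0r ?lerDl ?lerDr ?addr_ge0 ?ler01.
Qed.

(* A bridge end j has at most one
   clique mate that is a bridge end and one bridge neighbour, giving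
   p + 1/p + (1 + 1/p) <= (p + 2/p)(1 + 1/p); any other vertex has no bridge
   neighbour and at most two bridge-end mates, giving p + 2/p. *)
Lemma weighted_colsum_bound a n p (j : 'I_n) :
  (0 < a)%N -> (n <= p.+1 * a)%N -> (0 < p)%N ->
  \sum_(i < n) bridge_weight a p%:R i * adj_matrix (cliques_path a n) i j <=
    (p%:R + 2 / p%:R) * bridge_weight a p%:R j.
Proof.
move=> a_gt0 le_n p_gt0; set q : algC := p%:R.
have q_gt0 : 0 < q by rewrite ltr0n.
have qV_gt0 : 0 < q^-1 by rewrite invr_gt0.
apply: le_trans (weighted_colsum_le_counts a q j (ltW q_gt0)) _.
have mates_le : #|[set i | clique_mate a i j]|%:R <= q.
  by rewrite ler_nat; apply: card_clique_mates.
have := card_bridge_end_mates a j; have := card_bridge_neighbours a j.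
rewrite /bridge_weight; case: (bridge_end a j) => /= bridge_le ends_le.
- apply: (le_trans (y := q + q^-1 * 1%:R + (1 + q^-1) * 1%:R)).
    apply: lerD; first apply: lerD => //.
    + by rewrite ler_pM2l // ler_nat; lia.
    + by rewrite ler_pM2l ?ler_nat // addr_gt0.
  rewrite -subr_ge0.
  have -> : (q + 2 / q) * (1 + q^-1) - (q + q^-1 * 1%:R + (1 + q^-1) * 1%:R)
            = 2 / (q * q) by field; rewrite gt_eqF.
  by rewrite divr_ge0 // mulr_ge0 // ltW.
- move: bridge_le; rewrite leqn0 => /eqP ->.
  apply: (le_trans (y := q + q^-1 * 2%:R)); last by rewrite mulr1 mulrC.
  rewrite mulr0 addr0; apply: lerD => //.
  by rewrite ler_pM2l // ler_nat; lia.
Qed.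

Lemma lambda_min_le a N p :
  (0 < a)%N -> (a + a <= N)%N -> (N <= p.+1 * a)%N -> (0 < p)%N ->
  exists r : algC, lambda_min N a r /\ r <= p%:R + 2 / p%:R.
Proof.
case: N => [|N] a_gt0 le_2a_N le_N p_gt0; first by move: le_2a_N; lia.
have G_path : in_G a (cliques_path a N.+1).
  split; first exact: cliques_path_simple.
  split; first exact: cliques_path_connected.
  by apply: cliques_path_independence => //; lia.
have [r lam_r] := lambda_min_exists G_path.
exists r; split=> //; have [_ min_r] := lam_r.
have [s sr_s] := spectral_radius_exists (adj_matrix (cliques_path a N.+1)).
apply: le_trans (min_r _ _ G_path sr_s) _.
have [[b [eig_b <-]] _] := sr_s.
apply: (eigenvalue_norm_le_weighted_colsum
  (fun i => bridge_weight a p%:R i) _ _ _ eig_b).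
- by move=> i j; rewrite mxE ler0n.
- move=> i; rewrite /bridge_weight; case: bridge_end => //.
  by rewrite addr_gt0 // invr_gt0 ltr0n.
- by move=> j; apply: weighted_colsum_bound.
Qed.

Theorem lemma2p2 (alpha k t : nat) :
  (2 <= alpha)%N -> (2 <= k)%N -> (t < alpha)%N ->
  exists r : algC, lambda_min (k * alpha + t) alpha r /\
    (if t == 0%N then r <= (k.-1)%:R + 2 / (k.-1)%:R
     else r <= k%:R + 2 / k%:R).
Proof.
move=> alpha_ge2 k_ge2; case: t => [|t] lt_t_alpha /=.
  (* n = k alpha: every clique has exactly k = (k-1) + 1 vertices. *)
  by apply: lambda_min_le; nia.
(* k alpha < n < (k+1) alpha: every clique has at most k + 1 vertices. *)
by apply: lambda_min_le; nia.
Qed.
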